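(* Let $\ell$ be an odd prime. Then, as $T\to\infty$, $$|S^1(\ell,T)| \ll T,$$ where the implied constant may depend on $\ell$.
   Context: $\Phi_\ell(X)$ denotes the $\ell$-th cyclotomic polynomial. For a natural number $n$, $R_\ell(n):=\min\{d\in\mathbb{N}: n\mid \Phi_\ell(d)\}$ if such $d$ exists, and $R_\ell(n)=\infty$ otherwise. $\mathbb{P}$ denotes the set of primes $p$ that divide $\Phi_\ell(d)$ for some $d\in\mathbb{N}$. For a positive integer $i$ and real $T$, $S^i(\ell,T):=\{p\in\mathbb{P}: R_\ell(p^i)\le T\}$. *)

From mathcomp Require Import all_boot all_order all_algebra all_field.
Set Implicit Arguments. Unset Strict Implicit. Unset Printing Implicit Defensive.
Import Order.TTheory GRing.Theory Num.Theory.
Local Open Scope ring_scope.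

Definition divPhi (l n d : nat) : Prop := (n%:Z %| ('Phi_l).[d%:Z])%Z.

Definition is_R (l n d : nat) : Prop :=
  (0 < d)%N /\ divPhi l n d /\ forall d', (0 < d')%N -> divPhi l n d' -> (d <= d')%N.

Definition inP (l p : nat) : Prop := prime p /\ exists d, (0 < d)%N /\ divPhi l p d.

(* S^i(l,T) = { p in P : R_l(p^i) <= T } (R_l(p^i) = infinity never satisfies <= T). *)
Definition inS (i l : nat) (T : rat) (p : nat) : Prop :=
  inP l p /\ exists d, is_R l (p ^ i) d /\ (d%:R <= T).

From mathcomp Require Import all_boot all_order all_algebra all_field.
Import Order.TTheory GRing.Theory Num.Theory.

Set Implicit Arguments.
Unset Strict Implicit.
Unset Printing Implicit Defensive.

(** If p lies in S^1(l,T) and d = R_l(p) <= T, then d < p: the residue of d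
    modulo p is again a root of Phi_l mod p, and it is nonzero because
    Phi_l(0) = 1.  For prime l, Phi_l(d) = 1 + d + ... + d^(l-1) <= (d+1)^l,
    so at most l primes larger than d divide it.  Hence |S^1(l,T)| <= l T. *)

Lemma divisors_prime p : prime p -> divisors p = [:: 1; p].
Proof.
move=> pr_p; apply: (sorted_eq leq_trans anti_leq (sorted_divisors p)).
  by rewrite /= andbT prime_gt0.
apply: uniq_perm; rewrite ?divisors_uniq //=.
  by rewrite inE andbT neq_ltn prime_gt1.
have [_ dvd_p] := primeP pr_p.
move=> d; rewrite -dvdn_divisors ?prime_gt0 // !inE.
apply/idP/orP => [/dvd_p/orP// | [] /eqP->]; by rewrite ?dvd1n ?dvdnn.
Qed.

Lemma Cyclotomic1 : 'Phi_1 = ('X - 1)%R.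
Proof. by have := prod_Cyclotomic (isT : 0 < 1); rewrite big_seq1 expr1. Qed.

Lemma Cyclotomic_prime p : prime p -> 'Phi_p = (\sum_(i < p) 'X^i)%R.
Proof.
move=> pr_p; have := prod_Cyclotomic (prime_gt0 pr_p).
rewrite divisors_prime // big_cons big_seq1 Cyclotomic1 subrX1 => /mulfI; apply.
by rewrite monic_neq0 // monicXsubC.
Qed.

Definition geosum (l d : nat) : nat := \sum_(i < l) d ^ i.

Lemma horner_Cyclotomic_prime p d :
  prime p -> (('Phi_p).[d%:Z] = (geosum p d)%:Z)%R.
Proof.
move=> pr_p; rewrite Cyclotomic_prime // horner_sum -[RHS]natz natr_sum.
by apply: eq_bigr => i _; rewrite hornerXn natrX natz.
Qed.

Lemma divPhi_prime l n d : prime l -> divPhi l n d <-> n %| geosum l d.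
Proof. by move=> pr_l; rewrite /divPhi horner_Cyclotomic_prime. Qed.

Lemma geosumS l d : geosum l.+1 d = 1 + d * geosum l d.
Proof.
rewrite /geosum big_ord_recl big_distrr /=.
by congr (_ + _); apply: eq_bigr => i _; rewrite expnS.
Qed.

Lemma geosum_at0 l : 0 < l -> geosum l 0 = 1.
Proof. by case: l => // l _; rewrite geosumS. Qed.

Lemma geosum_gt0 l d : 0 < l -> 0 < geosum l d.
Proof. by case: l => // l _; rewrite geosumS. Qed.

Lemma geosum_modn l d n : geosum l (d %% n) = geosum l d %[mod n].
Proof.
elim: l => [|l IHl]; first by rewrite /geosum !big_ord0.
by rewrite !geosumS -[LHS]modnDmr modnMml -modnMmr IHl modnMmr modnDmr.
Qed.

Lemma geosum_le l d : geosum l d <= d.+1 ^ l.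
Proof.
elim: l => [|l IHl]; first by rewrite /geosum big_ord0.
rewrite geosumS expnS mulSn leq_add ?expn_gt0 // leq_mul2l.
by rewrite IHl orbT.
Qed.

Lemma is_R_lt l n d : prime l -> 1 < n -> is_R l n d -> d < n.
Proof.
move=> pr_l n_gt1 [_ [/(divPhi_prime _ _ pr_l) n_dvd R_min]].
have n_dvd_mod : n %| geosum l (d %% n) by rewrite /dvdn geosum_modn.
have mod_gt0 : 0 < d %% n.
  rewrite lt0n; apply: contraTneq n_dvd_mod => ->.
  by rewrite geosum_at0 ?prime_gt0 // dvdn1 neq_ltn n_gt1 orbT.
apply: leq_ltn_trans (R_min _ mod_gt0 _) (ltn_pmod _ (ltnW n_gt1)).
exact/(divPhi_prime _ _ pr_l).
Qed.

Lemma exp_count_primes_gt_le N d :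
  0 < N -> d.+1 ^ count (fun p => d < p) (primes N) <= N.
Proof.
(* Compare factorwise with N = \prod_(p <- primes N) p ^ logn p N. *)
move=> N_gt0; rewrite -iter_muln_1 -big_const_seq big_mkcond /=.
rewrite {2}[N]prod_prime_decomp // prime_decompE big_map /=.
rewrite !big_seq; apply: leq_prod => p p_N.
have p_gt0 : 0 < p by move: p_N; rewrite mem_primes => /and3P[/prime_gt0].
case: ltnP => [d_lt_p|_]; last by rewrite expn_gt0 p_gt0.
by apply: leq_trans d_lt_p _; rewrite -{1}[p]expn1 leq_pexp2l // logn_gt0.
Qed.

Lemma count_primes_gt_geosum l d :
  0 < l -> 0 < d -> count (fun p => d < p) (primes (geosum l d)) <= l.
Proof.
move=> l_gt0 d_gt0; rewrite -(@leq_exp2l d.+1) ?ltnS //.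
apply: leq_trans _ (geosum_le l d).
exact: exp_count_primes_gt_le (geosum_gt0 d l_gt0).
Qed.

Lemma size_primes_with_small_R l n s : prime l -> uniq s ->
  (forall p, p \in s -> prime p /\ exists2 d, is_R l p d & d <= n) ->
  size s <= n * l.
Proof.
move=> pr_l s_uniq s_R.
pose primes_gt_R d := [seq p <- primes (geosum l d) | d < p].
have s_sub : {subset s <= flatten [seq primes_gt_R d | d <- index_iota 1 n.+1]}.
  move=> p /s_R [pr_p [d R_pd d_le_n]]; apply/flatten_mapP; exists d.
    by rewrite mem_index_iota ltnS d_le_n R_pd.1.
  rewrite mem_filter (is_R_lt pr_l (prime_gt1 pr_p) R_pd) mem_primes pr_p.
  rewrite geosum_gt0 ?prime_gt0 //=; exact/(divPhi_prime _ _ pr_l)/R_pd.2.1.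
apply: leq_trans (uniq_leq_size s_uniq s_sub) _.
rewrite size_flatten sumnE !big_map.
apply: leq_trans (_ : _ <= \sum_(1 <= d < n.+1) l) _; last first.
  by rewrite sum_nat_const_nat subn1.
rewrite big_seq [X in _ <= X]big_seq.
apply: leq_sum => d; rewrite mem_index_iota => /andP[d_gt0 _] /=.
rewrite size_filter; exact: count_primes_gt_geosum (prime_gt0 pr_l) d_gt0.
Qed.

Local Open Scope ring_scope.

Theorem theorem1 (l : nat) (hl : prime l) (hodd : odd l) :
  exists C : rat, 0 < C /\ exists T0 : rat, forall T : rat, T0 <= T ->
    forall s : seq nat, uniq s -> (forall p, p \in s -> inS 1 l T p) ->
      (size s)%:R <= C * T.
Proof.
exists l%:R; split; first by rewrite ltr0n prime_gt0.
exists 0 => T T_ge0 s s_uniq s_S.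
have s_R p : p \in s -> prime p /\ exists2 d, is_R l p d & (d <= Num.trunc T)%N.
  move=> /s_S[[pr_p _] [d [R_pd d_le_T]]]; split=> //; exists d.
    by rewrite -[p]expn1.
  by rewrite truncn_ge_nat.
apply: le_trans (_ : (Num.trunc T * l)%:R <= _).
  by rewrite ler_nat size_primes_with_small_R.
by rewrite natrM mulrC ler_wpM2l ?truncn_le.
Qed.
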